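(* Let $X$ be a non-empty set, $\sigma : X \to X$ a bijection, and $A \subseteq \mathbb{C}^X$ a subalgebra (under pointwise operations) such that $h\circ\sigma \in A$ and $h \circ \sigma^{-1} \in A$ for all $h \in A$. Let $\widetilde{\sigma} : A \to A$ be the automorphism $\widetilde{\sigma}(f) = f\circ \sigma^{-1}$. Then the unique maximal abelian subalgebra of $A \rtimes_{\widetilde{\sigma}} \mathbb{Z}$ containing $A$ (namely the commutant $A'$ of $A$) is precisely \[ A' = \Big\{ \sum_{n\in\mathbb{Z}} f_n\delta^n \in A \rtimes_{\widetilde{\sigma}}\mathbb{Z} \;:\; \text{for all } n \in \mathbb{Z},\ f_n \text{ vanishes identically on } \mathrm{Sep}_A^n(X)\Big\}. \]
   Context: For $n \in \mathbb{Z}$, $\mathrm{Sep}_A^n(X) = \{x \in X : \exists h \in A \text{ with } h(x) \neq \widetilde{\sigma}^n(h)(x)\}$ (for $n=0$ this set is empty). The crossed product $A \rtimes_{\widetilde{\sigma}} \mathbb{Z}$ is the set of finitely supported functions $f:\mathbb{Z}\to A$, written $f=\sum_n f_n\delta^n$, with pointwise addition and scalar multiplication and multiplication $(f*g)(n)=\sum_{k} f(k)\cdot\widetilde{\sigma}^k(g(n-k))$, i.e. $(f_n\delta^n)*(g_m\delta^m)=f_n\,\widetilde{\sigma}^n(g_m)\,\delta^{n+m}$. $A$ is regarded as the subalgebra $\{f_0\delta^0 : f_0 \in A\}$. *)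

From mathcomp Require Import all_boot all_order all_algebra.
From mathcomp.real_closed Require Import complex.
From mathcomp Require Import Rstruct.
Set Implicit Arguments. Unset Strict Implicit. Unset Printing Implicit Defensive.
Import Order.TTheory GRing.Theory Num.Theory.
Local Open Scope ring_scope.

Notation CC := (complex Rdefinitions.R).

Section Defs.
Variable X : Type.

Definition is_subalgebra (A : (X -> CC) -> Prop) : Prop :=
  [/\ A (fun _ => 0),
      (forall f g, A f -> A g -> A (fun x => f x + g x)),
      (forall (c : CC) f, A f -> A (fun x => c * f x)) &
      (forall f g, A f -> A g -> A (fun x => f x * g x))].

Definition iterz (s si : X -> X) (k : int) : X -> X :=
  match k with
  | Posz n => iter n s
  | Negz n => iter n.+1 si
  end.

(* tilde-sigma^k (h) = h o sigma^{-k}  (since tilde-sigma(h) = h o sigma^{-1}) *)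
Definition tsig (s si : X -> X) (k : int) (h : X -> CC) : X -> CC :=
  fun x => h (iterz s si (- k) x).

Definition Sep (A : (X -> CC) -> Prop) (s si : X -> X) (n : int) (x : X) : Prop :=
  exists h, A h /\ h x <> tsig s si n h x.

(* Elements of the crossed product: coefficient families f_n together with a
   bound N such that f_n = 0 for |n| > N (finite support). *)
Record cp := CP { cp_bnd : nat; cp_coef : int -> X -> CC }.

Definition in_cp (A : (X -> CC) -> Prop) (f : cp) : Prop :=
  (forall n, A (cp_coef f n)) /\
  (forall n, (cp_bnd f < absz n)%N -> cp_coef f n = (fun _ => 0)).

(* (f * g)(n) = sum_k f(k) . tilde-sigma^k (g(n-k)), k ranging over the
   support bound [-N, N] of f. *)
Definition cp_mul (s si : X -> X) (f g : cp) : cp :=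
  CP (cp_bnd f + cp_bnd g)
    (fun n x => \sum_(i < (cp_bnd f).*2.+1)
        let k := (i%:Z - (cp_bnd f)%:Z)%R in
        cp_coef f k x * tsig s si k (cp_coef g (n - k)) x).

Definition cp_of (a : X -> CC) : cp :=
  CP 0 (fun n => if n == 0 then a else (fun _ => 0)).

Definition cp_eq (f g : cp) : Prop := forall n, cp_coef f n = cp_coef g n.

Definition in_commutant (A : (X -> CC) -> Prop) (s si : X -> X) (f : cp) : Prop :=
  in_cp A f /\
  forall a, A a -> cp_eq (cp_mul s si f (cp_of a)) (cp_mul s si (cp_of a) f).

End Defs.

From mathcomp Require Import all_boot all_order all_algebra.
From mathcomp.real_closed Require Import complex.
From mathcomp Require Import Rstruct.
From mathcomp Require Import zify.
From Stdlib Require Import FunctionalExtensionality.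
Set Implicit Arguments. Unset Strict Implicit.
Import GRing.Theory.
Local Open Scope ring_scope.

(* Multiplying by [a] in [A] on the left, resp. on the right, acts on the n-th
   coefficient by [a], resp. by [tsig n a].  So [f] commutes with [a] exactly
   when each [f_n] vanishes wherever [a] and [tsig n a] differ; ranging over
   all [a] in [A], this is vanishing on [Sep n]. *)

Lemma sum_ord_shift_indicator (V : zmodType) (N : nat) (n : int) (c : V) :
  \sum_(i < N.*2.+1) (if i%:Z - N%:Z == n then c else 0) =
  if (absz n <= N)%N then c else 0.
Proof.
case: leqP => [le_nN | lt_Nn]; last first.
  by rewrite big1 // => i _; case: eqP => //; have := ltn_ord i; lia.
have lt_i : (absz (n + N%:Z)%R < N.*2.+1)%N by lia.
rewrite (bigD1 (Ordinal lt_i)) //= big1 => [|i ne_i].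
  by case: eqP; [rewrite addr0 | lia].
case: eqP => // eq_i; case/eqP: ne_i; apply: val_inj => /=; lia.
Qed.

Section CrossedProductByFunction.
Variables (X : Type) (s si : X -> X).

Definition cp_bounded (f : cp X) : Prop :=
  forall k, (cp_bnd f < absz k)%N -> cp_coef f k = (fun _ => 0).

Lemma cp_coef_cp_of_mul (a : X -> CC) (f : cp X) n x :
  cp_coef (cp_mul s si (cp_of a) f) n x = a x * cp_coef f n x.
Proof. by rewrite /= big_ord1 /= subrr /tsig oppr0 subr0. Qed.

Lemma cp_coef_mul_cp_of (f : cp X) (a : X -> CC) n x : cp_bounded f ->
  cp_coef (cp_mul s si f (cp_of a)) n x = cp_coef f n x * tsig s si n a x.
Proof.
move=> f_bnd /=.
rewrite (eq_bigr (fun i : 'I_(cp_bnd f).*2.+1 =>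
  if i%:Z - (cp_bnd f)%:Z == n then cp_coef f n x * tsig s si n a x else 0)).
  rewrite sum_ord_shift_indicator; case: leqP => // lt_bn.
  by rewrite f_bnd // mul0r.
move=> i _; rewrite subr_eq0 eq_sym.
by case: eqP => [-> // | _]; rewrite /tsig mulr0.
Qed.

Lemma cp_commute_cp_of (f : cp X) (a : X -> CC) : cp_bounded f ->
  cp_eq (cp_mul s si f (cp_of a)) (cp_mul s si (cp_of a) f) <->
  (forall n x, a x <> tsig s si n a x -> cp_coef f n x = 0).
Proof.
move=> f_bnd; split => [fa_af n x ne_a | f_vanish n].
  have := congr1 (fun g => g x) (fa_af n).
  rewrite cp_coef_mul_cp_of // cp_coef_cp_of_mul mulrC => /eqP.
  rewrite -subr_eq0 -mulrBl mulf_eq0 subr_eq0 => /orP [/eqP eq_a | /eqP //].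
  by case: ne_a.
apply: functional_extensionality => x.
rewrite cp_coef_mul_cp_of // cp_coef_cp_of_mul.
have [eq_a | ne_a] := eqVneq (a x) (tsig s si n a x); first by rewrite eq_a mulrC.
by rewrite f_vanish ?mulr0 ?mul0r //; apply/eqP.
Qed.

End CrossedProductByFunction.

Theorem theorem3p3
  (X : Type) (x0 : X) (sigma sigmainv : X -> X)
  (Hs1 : cancel sigma sigmainv) (Hs2 : cancel sigmainv sigma)
  (A : (X -> CC) -> Prop) (HA : is_subalgebra A)
  (HAs : forall h, A h -> A (fun x => h (sigma x)))
  (HAsi : forall h, A h -> A (fun x => h (sigmainv x))) :
  forall f : cp X,
    in_commutant A sigma sigmainv f <->
    (in_cp A f /\
     forall (n : int) (x : X), Sep A sigma sigmainv n x -> cp_coef f n x = 0).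
Proof.
move=> f; split => [[f_cp f_comm] | [f_cp f_sep]]; split => //.
  move=> n x [h [Ah ne_h]].
  exact: (cp_commute_cp_of sigma sigmainv h f_cp.2).1 (f_comm h Ah) n x ne_h.
move=> a Aa; apply/(cp_commute_cp_of sigma sigmainv a f_cp.2) => n x ne_a.
by apply: f_sep; exists a.
Qed.
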